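(* Let $a=a_0+a_1e_1+a_2e_2+a_3e_3\in C\ell_2\setminus\mathbb{R}$ with $G(a)=0$. Then there exists $u\in C\ell_2\setminus Z(C\ell_2)$ such that $u^{-1}au=a_0+e_2+e_3$.
   Context: $C\ell_2$ is the 4-dimensional real associative algebra with basis $1,e_1,e_2,e_3$ and multiplication $e_1^2=e_2^2=1$, $e_3^2=-1$, $e_1e_2=e_3=-e_2e_1$, $e_1e_3=e_2=-e_3e_1$, $e_3e_2=e_1=-e_2e_3$; $\mathbb{R}$ is identified with $\mathbb{R}\cdot1$. For $a=a_0+a_1e_1+a_2e_2+a_3e_3$: $G(a)=a_1^2+a_2^2-a_3^2$, $H_a=a_0^2-a_1^2-a_2^2+a_3^2$; $Z(C\ell_2)=\{a:H_a=0\}$, and elements outside $Z(C\ell_2)$ are invertible. *)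

From HB Require Import structures.
From mathcomp Require Import all_boot all_order all_algebra.
From mathcomp Require Import reals.
Set Implicit Arguments. Unset Strict Implicit. Unset Printing Implicit Defensive.
Import Order.TTheory GRing.Theory Num.Theory.
Local Open Scope ring_scope.

Record Cl2 (R : realType) := mkCl2 { c0 : R; c1 : R; c2 : R; c3 : R }.
Arguments mkCl2 {R}.

Section Cl2ops.
Variable R : realType.

(* Multiplication from e1^2=e2^2=1, e3^2=-1, e1e2=e3=-e2e1,
   e1e3=e2=-e3e1, e3e2=e1=-e2e3, extended bilinearly. *)
Definition cl2_mul (a b : Cl2 R) : Cl2 R :=
  mkCl2 (c0 a * c0 b + c1 a * c1 b + c2 a * c2 b - c3 a * c3 b)
        (c0 a * c1 b + c1 a * c0 b - c2 a * c3 b + c3 a * c2 b)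
        (c0 a * c2 b + c2 a * c0 b + c1 a * c3 b - c3 a * c1 b)
        (c0 a * c3 b + c3 a * c0 b + c1 a * c2 b - c2 a * c1 b).

Definition cl2_one : Cl2 R := mkCl2 1 0 0 0.

Definition cl2_real (r : R) : Cl2 R := mkCl2 r 0 0 0.

Definition cl2_is_real (a : Cl2 R) : Prop := c1 a = 0 /\ c2 a = 0 /\ c3 a = 0.

Definition cl2_G (a : Cl2 R) : R := c1 a ^+ 2 + c2 a ^+ 2 - c3 a ^+ 2.
Definition cl2_H (a : Cl2 R) : R :=
  c0 a ^+ 2 - c1 a ^+ 2 - c2 a ^+ 2 + c3 a ^+ 2.

Definition cl2_Z (a : Cl2 R) : Prop := cl2_H a = 0.

Definition cl2_inverse_of (v u : Cl2 R) : Prop :=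
  cl2_mul v u = cl2_one /\ cl2_mul u v = cl2_one.
End Cl2ops.

(* Write a = a0 + v with v = a1 e1 + a2 e2 + a3 e3. Then v^2 = G(a) = 0 = (e2 + e3)^2,
   and u^-1 a u = a0 + e2 + e3 amounts to the linear equation v u = u (e2 + e3).
   Two explicit solutions of it have H = 8 (a2 + a3) and H = -8 (a2 - a3); since
   G(a) = 0 and a is not real, a3 <> 0, so at least one of them is invertible. *)
From mathcomp Require Import all_boot all_order all_algebra.
From mathcomp Require Import reals.
From mathcomp Require Import ring lra.
Import Order.TTheory GRing.Theory Num.Theory.
Set Implicit Arguments. Unset Strict Implicit.
Local Open Scope ring_scope.

Section Cl2Conjugacy.
Variable R : realType.
Implicit Types a u v b : Cl2 R.

Lemma cl2_ext a b :
  c0 a = c0 b -> c1 a = c1 b -> c2 a = c2 b -> c3 a = c3 b -> a = b.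
Proof. by case: a; case: b => /= ? ? ? ? ? ? ? ? -> -> -> ->. Qed.

Lemma cl2_mulA a u b : cl2_mul a (cl2_mul u b) = cl2_mul (cl2_mul a u) b.
Proof. by apply: cl2_ext; rewrite /cl2_mul /=; ring. Qed.

Lemma cl2_mul1r a : cl2_mul (cl2_one R) a = a.
Proof. by apply: cl2_ext; rewrite /cl2_mul /=; ring. Qed.

Definition cl2_inv u : Cl2 R :=
  let h := cl2_H u in mkCl2 (c0 u / h) (- c1 u / h) (- c2 u / h) (- c3 u / h).

Lemma cl2_inverse_of_inv u : ~ cl2_Z u -> cl2_inverse_of (cl2_inv u) u.
Proof.
rewrite /cl2_Z /cl2_inv /cl2_H => /eqP hu.
by split; apply: cl2_ext; rewrite /cl2_mul /cl2_one /=; field.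
Qed.

Lemma cl2_conj_intertwine v u a b :
  cl2_inverse_of v u -> cl2_mul a u = cl2_mul u b -> cl2_mul (cl2_mul v a) u = b.
Proof. by move=> [vu _] aub; rewrite -cl2_mulA aub cl2_mulA vu cl2_mul1r. Qed.

Lemma cl2_G_eq0_real a : cl2_G a = 0 -> c3 a = 0 -> cl2_is_real a.
Proof.
rewrite /cl2_G => + a3_0; rewrite a3_0 expr0n /= subr0 => /eqP.
by rewrite paddr_eq0 ?sqr_ge0 // !sqrf_eq0 => /andP[/eqP a1_0 /eqP a2_0].
Qed.

Definition null_intertwiner_add a : Cl2 R :=
  let s := c2 a + c3 a in mkCl2 (s + 2) (s - 2) (- c1 a) (c1 a).

Definition null_intertwiner_sub a : Cl2 R :=
  let d := c2 a - c3 a in mkCl2 (c1 a) (c1 a) (2 + d) (2 - d).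

Lemma cl2_H_null_intertwiner_add a :
  cl2_H (null_intertwiner_add a) = 8 * (c2 a + c3 a).
Proof. by rewrite /cl2_H /=; ring. Qed.

Lemma cl2_H_null_intertwiner_sub a :
  cl2_H (null_intertwiner_sub a) = - 8 * (c2 a - c3 a).
Proof. by rewrite /cl2_H /=; ring. Qed.

(* Coordinatewise, a u - u (a0 + e2 + e3) is a constant multiple of G(a), hence lra. *)
Lemma null_intertwiner_addP a : cl2_G a = 0 ->
  cl2_mul a (null_intertwiner_add a) =
  cl2_mul (null_intertwiner_add a) (mkCl2 (c0 a) 0 1 1).
Proof.
by rewrite /cl2_G => hG; apply: cl2_ext; rewrite /cl2_mul /=; lra.
Qed.

Lemma null_intertwiner_subP a : cl2_G a = 0 ->
  cl2_mul a (null_intertwiner_sub a) =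
  cl2_mul (null_intertwiner_sub a) (mkCl2 (c0 a) 0 1 1).
Proof.
by rewrite /cl2_G => hG; apply: cl2_ext; rewrite /cl2_mul /=; lra.
Qed.

Lemma cl2_null_intertwiner a : ~ cl2_is_real a -> cl2_G a = 0 ->
  exists2 u, ~ cl2_Z u & cl2_mul a u = cl2_mul u (mkCl2 (c0 a) 0 1 1).
Proof.
move=> nreal hG; have a3_neq0 : c3 a != 0.
  by apply/eqP => a3_0; apply: nreal; apply: cl2_G_eq0_real.
(* (a2 + a3) - (a2 - a3) = 2 a3 <> 0: the two intertwiners are not both singular. *)
have [s0 | s_neq0] := eqVneq (c2 a + c3 a) 0.
- exists (null_intertwiner_sub a); last exact: null_intertwiner_subP.
  rewrite /cl2_Z cl2_H_null_intertwiner_sub => /eqP.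
  rewrite mulf_eq0 oppr_eq0 pnatr_eq0 /= subr_eq0 => /eqP a2_a3.
  by move/eqP: a3_neq0; apply; lra.
- exists (null_intertwiner_add a); last exact: null_intertwiner_addP.
  rewrite /cl2_Z cl2_H_null_intertwiner_add => /eqP.
  by rewrite mulf_eq0 pnatr_eq0 (negPf s_neq0).
Qed.

End Cl2Conjugacy.

Theorem proposition5p5 (R : realType) (a : Cl2 R) :
  ~ cl2_is_real a -> cl2_G a = 0 ->
  exists u : Cl2 R, ~ cl2_Z u /\
    exists uinv : Cl2 R, cl2_inverse_of uinv u /\
      cl2_mul (cl2_mul uinv a) u = mkCl2 (c0 a) 0 1 1.
Proof.
move=> nreal hG; have [u uZ intertwine] := cl2_null_intertwiner nreal hG.
exists u; split=> //; exists (cl2_inv u); have uinv := cl2_inverse_of_inv uZ.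
by split=> //; apply: cl2_conj_intertwine intertwine.
Qed.
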